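(* Suppose $\theta_t=\theta$ for all $t$ (a constant) and $\mathbb{S}_\theta=\{\theta\in\mathbb{R}^{d_\theta}:[\theta]_k\ge0\ \forall k,\ \sum_{k=1}^{d_\theta}[\theta]_k=1\}$. Then the system $x_{t+1}=A_t(\theta)x_t+B_t(\theta)u_t$ is time-invariant SMP in each of the following cases. (i) ($v_t$ i.i.d.) $v_t(\theta)=v_t$ is i.i.d. with respect to $t$ and independent of $\theta$: it is TI SMP with $N=1$, $\phi(\theta)=1$, $M^{(1)}=\mathrm{E}[v_tv_t^\top]$. (ii) (deterministic polytope) $v_t(\theta)=\sum_{k=1}^{d_\theta}[\theta]_kv^{(k)}$ with deterministic vectors $v^{(k)}\in\mathbb{R}^{n(n+m)}$, and the conditional expectation $\mathrm{E}[v_tv_t^\top|\theta]$ is taken as the deterministic value $v_tv_t^\top$: it is TI SMP with $N=d_\theta^2$, $\phi(\theta)=\mathrm{vec}(\theta\theta^\top)$, $M^{(d_\theta(k'-1)+k)}=\tfrac12\big(v^{(k)}v^{(k')\top}+v^{(k')}v^{(k)\top}\big)$ for $k,k'\in\{1,\dots,d_\theta\}$. (iii) (random polytope) $v_t(\theta)=\sum_{k=1}^{d_\theta}[\theta]_kv_t^{(k)}$ where the random vertices $v_t^{(k)}$ are i.i.d. with respect to $t$ and independent of $\theta$: it is TI SMP with $N=d_\theta^2$, $\phi(\theta)=\mathrm{vec}(\theta\theta^\top)$, $M^{(d_\theta(k'-1)+k)}=\tfrac12\mathrm{E}\big[v_t^{(k)}v_t^{(k')\top}+v_t^{(k')}v_t^{(k)\top}\big]$.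 (iv) (uncertain mean and covariance) $\mathrm{E}[v_t(\theta)|\theta]=\sum_{k=1}^{d_\theta}[\theta]_k\mu^{(k)}$ and $\mathrm{Cov}[v_t(\theta)|\theta]=\sum_{k=1}^{d_\theta}[\theta]_k\Sigma^{(k)}$ with deterministic $\mu^{(k)}\in\mathbb{R}^{n(n+m)}$ and symmetric $\Sigma^{(k)}$: it is TI SMP with $N=d_\theta^2$, $\phi(\theta)=\mathrm{vec}(\theta\theta^\top)$, $M^{(d_\theta(k'-1)+k)}=\tfrac12\big(\mu^{(k)}\mu^{(k')\top}+\mu^{(k')}\mu^{(k)\top}\big)+\Sigma^{(k)}$.
   Context: System $x_{t+1}=A_t(\theta_t)x_t+B_t(\theta_t)u_t$ with $x_t\in\mathbb{R}^n$, $u_t\in\mathbb{R}^m$, uncertain $\theta_t\in\mathbb{S}_\theta\subset\mathbb{R}^{d_\theta}$, and random $v_t(\theta_t):=\mathrm{vec}([A_t(\theta_t),B_t(\theta_t)])\in\mathbb{R}^{n(n+m)}$ ($\mathrm{vec}$ stacks columns), distributed according to a conditional density $p(v_t\mid\theta_t)$ independently over $t$; $\mathrm{E}[\cdot|\theta]$ and $\mathrm{Cov}[\cdot|\theta]$ are conditional expectation/covariance given the parameter sequence. $\mathbb{P}_N:=\{\varphi\in\mathbb{R}^N:\varphi_k\ge0,\sum\varphi_k=1\}$. The system is second moment polytopic (SMP) if there exist a positive integer $N$, symmetric $M^{(1)},\dots,M^{(N)}\in\mathbb{R}^{n(n+m)\times n(n+m)}$ and a map $\phi:\mathbb{S}_\theta\to\mathbb{P}_N$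 with $\mathrm{E}[v_t(\theta_t)v_t(\theta_t)^\top|\theta_\bullet]=\sum_{k=1}^N[\phi(\theta_t)]_kM^{(k)}$ for all $t$ and all parameter sequences; it is time-invariant (TI) SMP if moreover $\theta_t=\theta$ is constant. *)

From HB Require Import structures.
From mathcomp Require Import all_boot all_order all_algebra.
From mathcomp Require Import all_classical all_reals.
From mathcomp Require Import measure lebesgue_measure lebesgue_integral hoelder probability.
Set Implicit Arguments. Unset Strict Implicit. Unset Printing Implicit Defensive.
Import Order.TTheory GRing.Theory Num.Theory.
Local Open Scope classical_set_scope.
Local Open Scope ring_scope.

(* Column-stacking vectorisation vec : R^{p x q} -> R^{pq}.              *)
(* Index k (0-based) of vec A corresponds to the pair (j, i) with       *)
(* k = j * p + i, i.e. entry A i j (i row, j column).                   *)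
Definition vec_pair (p q : nat) (k : 'I_(q * p)) : 'I_q * 'I_p :=
  enum_val (cast_ord (esym (mxvec_cast q p)) k).

Definition colvec {R : Type} (p q : nat) (A : 'M[R]_(p, q)) : 'cV[R]_(q * p) :=
  \col_k A (vec_pair k).2 (vec_pair k).1.

Definition simplex {R : numDomainType} (N : nat) (phi : 'cV[R]_N) : Prop :=
  (forall k, 0 <= phi k 0) /\ \sum_k phi k 0 = 1.

Definition vAB {R : Type} {Omega Theta : Type} (n m : nat)
  (A : nat -> Theta -> Omega -> 'M[R]_n) (B : nat -> Theta -> Omega -> 'M[R]_(n, m))
  (t : nat) (theta : Theta) (w : Omega) : 'cV[R]_((n + m) * n) :=
  colvec (row_mx (A t theta w) (B t theta w)).

Section Prob.
Context {R : realType} {d : measure_display} {Omega : measurableType d}.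
Variable P : probability Omega R.

Definition smom (D : nat) (X : Omega -> 'cV[R]_D) (i j : 'I_D) : \bar R :=
  'E_P[fun w => X w i 0 * X w j 0].

(* These form a pi-system
   generating the sigma-algebra of the random vector (X_i)_i. *)
Definition rect_event (I : finType) (X : I -> Omega -> R) (B : I -> set R) : set Omega :=
  \bigcap_(i in [set: I]) (X i @^-1` B i).

Definition indep_seq (I : finType) (X : nat -> I -> Omega -> R) : Prop :=
  forall (s : seq nat), uniq s ->
  forall B : nat -> I -> set R, (forall t i, measurable (B t i)) ->
  P (\bigcap_(t in [set t | t \in s]) rect_event (X t) (B t)) =
  (\prod_(t <- s) P (rect_event (X t) (B t)))%E.

Definition ident_distr (I : finType) (X : nat -> I -> Omega -> R) : Prop :=
  forall t (B : I -> set R), (forall i, measurable (B i)) ->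
  P (rect_event (X t) B) = P (rect_event (X 0%N) B).

Definition iid (I : finType) (X : nat -> I -> Omega -> R) : Prop :=
  indep_seq X /\ ident_distr X.

(* The parameter
   theta is constant in time; E[ . | theta] is the expectation of the
   random quantity v_t(theta) for that (fixed) parameter value. *)
Definition TI_SMP_with (dth D : nat) (S : set 'cV[R]_dth)
  (v : nat -> 'cV[R]_dth -> Omega -> 'cV[R]_D)
  (N : nat) (M : 'I_N -> 'M[R]_D) (phi : 'cV[R]_dth -> 'cV[R]_N) : Prop :=
  [/\ forall k, (M k)^T = M k,
      forall theta, S theta -> simplex (phi theta) &
      forall t theta, S theta -> forall i j : 'I_D,
        smom (v t theta) i j = (\sum_k (phi theta) k 0 * M k i j)%:E].

Definition TI_SMP (dth D : nat) (S : set 'cV[R]_dth)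
  (v : nat -> 'cV[R]_dth -> Omega -> 'cV[R]_D) : Prop :=
  exists N (M : 'I_N -> 'M[R]_D) (phi : 'cV[R]_dth -> 'cV[R]_N),
    (0 < N)%N /\ TI_SMP_with S v M phi.

End Prob.

Definition phi_poly {R : comNzRingType} (dth : nat) (theta : 'cV[R]_dth) : 'cV[R]_(dth * dth) :=
  colvec (theta *m theta^T).

(* M^{(d(k'-1)+k)} = F k k' : index k (0-based) of vec corresponds to (k', k). *)
Definition M_poly {T : Type} (dth : nat) (F : 'I_dth -> 'I_dth -> T) (idx : 'I_(dth * dth)) : T :=
  F (vec_pair idx).2 (vec_pair idx).1.

From HB Require Import structures.
From mathcomp Require Import all_boot all_order all_algebra.
From mathcomp Require Import all_classical all_reals.
From mathcomp Require Import measure lebesgue_measure lebesgue_integral hoelder probability.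
From mathcomp Require Import measurable_realfun numfun ring.
Set Implicit Arguments. Unset Strict Implicit. Unset Printing Implicit Defensive.
Import Order.TTheory GRing.Theory Num.Theory.
Local Open Scope classical_set_scope.
Local Open Scope ring_scope.

(* Each second moment E[v_t v_t^T] is a quadratic form sum_(a,b) theta_a theta_b G_ab in the
   parameter; in case (iv) the covariance part sum_a theta_a Sigma_a takes this form because
   sum_b theta_b = 1.  Replacing G_ab by (G_ab + G_ba)/2 leaves the form unchanged and makes
   the matrices G_ab symmetric, and vec(theta theta^T) lies in the simplex of dimension
   dth^2, which gives the polytopic representation.  In the i.i.d. cases the moment at
   time t equals the one at time 0: E[XY] depends only on the joint law of (X, Y), and
   that law is determined by its values on measurable rectangles. *)

Lemma vec_pair_bij q p : bijective (@vec_pair p q).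
Proof.
exists (fun x => cast_ord (mxvec_cast q p) (enum_rank x)) => k.
  by rewrite /vec_pair enum_valK cast_ordKV.
by rewrite /vec_pair cast_ordK enum_rankK.
Qed.

Lemma big_vec_pair {V : Type} {idx : V} {op : Monoid.com_law idx} {q p}
    (G : 'I_q * 'I_p -> V) :
  \big[op/idx]_k G (vec_pair k) = \big[op/idx]_(x : 'I_q * 'I_p) G x.
Proof. by rewrite [RHS](reindex (@vec_pair p q)) //; exact: onW_bij (vec_pair_bij _ _). Qed.

Lemma mulmx_trE (R : pzRingType) D (u v : 'cV[R]_D) i j :
  (u *m v^T) i j = u i 0 * v j 0.
Proof. by rewrite !mxE big_ord1 !mxE. Qed.

Lemma mul_sumZ_coord (R : comPzRingType) p D (c : 'I_p -> R) (x : 'I_p -> 'cV[R]_D) i j :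
  (\sum_k c k *: x k) i 0 * (\sum_k c k *: x k) j 0 =
  \sum_a \sum_b c a * c b * (x a i 0 * x b j 0).
Proof.
rewrite !summxE big_distrlr /=; apply: eq_bigr => a _; apply: eq_bigr => b _.
by rewrite !mxE mulrACA.
Qed.

Lemma sum_quad_symmetrize (R : numFieldType) p (c : 'I_p -> R) (g : 'I_p -> 'I_p -> R) :
  \sum_a \sum_b c a * c b * (2^-1 * (g a b + g b a)) = \sum_a \sum_b c a * c b * g a b.
Proof.
have swap : \sum_a \sum_b c a * c b * g b a = \sum_a \sum_b c a * c b * g a b.
  by rewrite [LHS]exchange_big; apply: eq_bigr => a _; apply: eq_bigr => b _ /=; ring.
transitivity (2^-1 * (\sum_a \sum_b c a * c b * g a b + \sum_a \sum_b c a * c b * g b a)).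
  rewrite mulrDr !mulr_sumr -big_split; apply: eq_bigr => a _ /=.
  by rewrite !mulr_sumr -big_split; apply: eq_bigr => b _ /=; ring.
by rewrite swap; field.
Qed.

Section phi_poly.
Variables (R : numFieldType) (dth : nat).

Lemma phi_polyE (th : 'cV[R]_dth) k :
  phi_poly th k 0 = th (vec_pair k).2 0 * th (vec_pair k).1 0.
Proof. by rewrite mxE mulmx_trE. Qed.

Lemma sum_phi_poly_M_poly D (th : 'cV[R]_dth) (F : 'I_dth -> 'I_dth -> 'M[R]_D) i j :
  \sum_k phi_poly th k 0 * M_poly F k i j = \sum_a \sum_b th a 0 * th b 0 * F a b i j.
Proof.
under eq_bigr do rewrite phi_polyE.
rewrite (big_vec_pair (fun x => th x.2 0 * th x.1 0 * F x.2 x.1 i j)).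
by rewrite -(pair_bigA _ (fun b a => th a 0 * th b 0 * F a b i j)) exchange_big.
Qed.

Lemma simplex_phi_poly (th : 'cV[R]_dth) : simplex th -> simplex (phi_poly th).
Proof.
move=> [th_ge0 th_sum1]; split=> [k|]; first by rewrite phi_polyE mulr_ge0.
under eq_bigr do rewrite phi_polyE mulrC.
rewrite (big_vec_pair (fun x => th x.1 0 * th x.2 0)).
by rewrite -(pair_bigA _ (fun a b => th a 0 * th b 0)) -big_distrlr /= th_sum1 mulr1.
Qed.

End phi_poly.

Lemma symprodE (R : numFieldType) D (u v : 'cV[R]_D) i j :
  (2^-1 *: (u *m v^T + v *m u^T)) i j = 2^-1 * (u i 0 * v j 0 + v i 0 * u j 0).
Proof. by rewrite 2!mxE !mulmx_trE. Qed.

Lemma tr_symprod (R : numFieldType) D (u v : 'cV[R]_D) :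
  (2^-1 *: (u *m v^T + v *m u^T))^T = 2^-1 *: (u *m v^T + v *m u^T).
Proof. by apply/matrixP => i j; rewrite mxE !symprodE addrC [u j 0 * _]mulrC [v j 0 * _]mulrC. Qed.

Lemma integral_comp_pushforward_eq d d' (T : measurableType d) (T' : measurableType d')
    (R : realType) (mu : {measure set T -> \bar R}) (phi psi : T -> T') (f : T' -> \bar R) :
  measurable_fun [set: T] phi -> measurable_fun [set: T] psi -> measurable_fun [set: T'] f ->
  (forall A, measurable A -> pushforward mu phi A = pushforward mu psi A) ->
  (\int[mu]_x (f \o phi) x = \int[mu]_x (f \o psi) x)%E.
Proof.
move=> mphi mpsi mf law.
have ge0_eq g : measurable_fun [set: T'] g -> (forall y, 0 <= g y)%E ->
    (\int[mu]_x (g \o phi) x = \int[mu]_x (g \o psi) x)%E.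
  move=> mg g0.
  have := ge0_integral_pushforward mphi mu measurableT (measurable_funTS mg) (fun y _ => g0 y).
  have := ge0_integral_pushforward mpsi mu measurableT (measurable_funTS mg) (fun y _ => g0 y).
  rewrite !preimage_setT => <- <-.
  by apply: eq_measure_integral => A mA _; exact: law.
rewrite integralE [RHS]integralE (funepos_comp f phi) (funepos_comp f psi).
rewrite (funeneg_comp f phi) (funeneg_comp f psi).
congr (_ - _)%E; apply: ge0_eq.
- exact: measurable_funepos.
- exact: funepos_ge0.
- exact: measurable_funeneg.
- exact: funeneg_ge0.
Qed.

Section law.
Context {R : realType} {d : measure_display} {Omega : measurableType d}.
Variable P : probability Omega R.

Lemma pushforward_pair_eq d1 d2 (T1 : measurableType d1) (T2 : measurableType d2)
    (X1 Y1 : Omega -> T1) (X2 Y2 : Omega -> T2) :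
  measurable_fun setT X1 -> measurable_fun setT X2 ->
  measurable_fun setT Y1 -> measurable_fun setT Y2 ->
  (forall A B, measurable A -> measurable B ->
     P (X1 @^-1` A `&` X2 @^-1` B) = P (Y1 @^-1` A `&` Y2 @^-1` B)) ->
  forall C, measurable C ->
  pushforward P (fun w => (X1 w, X2 w)) C = pushforward P (fun w => (Y1 w, Y2 w)) C.
Proof.
move=> mX1 mX2 mY1 mY2 rect_eq.
have mX : measurable_fun setT (fun w => (X1 w, X2 w)) by exact: measurable_fun_pair.
have mY : measurable_fun setT (fun w => (Y1 w, Y2 w)) by exact: measurable_fun_pair.
apply: (@measure_unique _ _ _ [set A `*` B | A in measurable & B in measurable]
  (fun _ => setT)) => //.
- exact: measurable_prod_measurableType.
- move=> _ _ [A mA [B mB <-]] [A' mA' [B' mB' <-]].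
  by exists (A `&` A'); [exact: measurableI|exists (B `&` B'); [exact: measurableI|rewrite setXI]].
- by move=> _; exists setT => //; exists setT => //; rewrite setXTT.
- by rewrite bigcup_const.
- by move=> _ [A mA [B mB <-]]; exact: rect_eq.
- by move=> _; rewrite /= /pushforward preimage_setT probability_setT ltry.
Qed.

Lemma expectation_mul_eq_law (X1 X2 Y1 Y2 : Omega -> R) :
  measurable_fun setT X1 -> measurable_fun setT X2 ->
  measurable_fun setT Y1 -> measurable_fun setT Y2 ->
  (forall A B, measurable A -> measurable B ->
     P (X1 @^-1` A `&` X2 @^-1` B) = P (Y1 @^-1` A `&` Y2 @^-1` B)) ->
  expectation P (fun w => X1 w * X2 w) = expectation P (fun w => Y1 w * Y2 w).
Proof.
move=> mX1 mX2 mY1 mY2 rect_eq; rewrite unlock.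
apply: (integral_comp_pushforward_eq (f := fun x : R * R => (x.1 * x.2)%:E)
  (phi := fun w => (X1 w, X2 w)) (psi := fun w => (Y1 w, Y2 w))).
- exact: measurable_fun_pair.
- exact: measurable_fun_pair.
- by apply/measurable_EFinP; apply: measurable_funM; [exact: measurable_fst|exact: measurable_snd].
- exact: pushforward_pair_eq.
Qed.

Lemma rect_event_pair (I : finType) (X : I -> Omega -> R) (i j : I) (A B : set R) :
  X i @^-1` A `&` X j @^-1` B =
  rect_event X (fun k => (if k == i then A else setT) `&` (if k == j then B else setT)).
Proof.
apply/seteqP; split => w /=.
- by move=> [XA XB] k _ /=; split; case: eqP => [->|].
- by move=> Xw; split; [case: (Xw i Logic.I) | case: (Xw j Logic.I)]; rewrite eqxx.
Qed.

Lemma ident_distr_expectation_mul (I : finType) (X : nat -> I -> Omega -> R) (i j : I) t :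
  (forall t k, measurable_fun setT (X t k)) -> ident_distr P X ->
  expectation P (fun w => X t i w * X t j w) =
  expectation P (fun w => X 0%N i w * X 0%N j w).
Proof.
move=> mX law; apply: expectation_mul_eq_law => // A B mA mB.
by rewrite !rect_event_pair; apply: law => k; apply: measurableI; case: eqP.
Qed.

Lemma expectation_sumZ (I : finType) (c : I -> R) (F : I -> Omega -> R) :
  (forall k, F k \in Lfun P 1) ->
  expectation P (fun w => \sum_k c k * F k w) = (\sum_k c k * fine (expectation P (F k)))%:E.
Proof.
move=> F1.
have -> : (fun w => \sum_k c k * F k w) = \sum_(X <- [seq c k \o* F k | k <- index_enum I]) X.
  by apply/funext => w; rewrite fct_sumE big_map; apply: eq_bigr => k _; rewrite /= mulrC.
rewrite expectation_sum; last by move=> _ /mapP[k _ ->]; exact: Lfun_scale.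
rewrite big_map -sumEFin; apply: eq_bigr => k _.
by rewrite expectationZl // EFinM fineK // expectation_fin_num.
Qed.

End law.

Section TI_SMP_cases.
Context {R : realType} {d : measure_display} {Omega : measurableType d}.
Variables (P : probability Omega R) (dth D : nat).
Implicit Types (v : nat -> 'cV[R]_dth -> Omega -> 'cV[R]_D) (S : set 'cV[R]_dth).

Lemma TI_SMP_withW S v N (M : 'I_N -> 'M[R]_D) (phi : 'cV[R]_dth -> 'cV[R]_N) :
  (0 < N)%N -> TI_SMP_with P S v M phi -> TI_SMP P S v.
Proof. by move=> N_gt0 smp; exists N, M, phi. Qed.

Lemma TI_SMP_with_phi_poly v (F : 'I_dth -> 'I_dth -> 'M[R]_D) :
  (forall a b, (F a b)^T = F a b) ->
  (forall t th, simplex th -> forall i j,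
     smom P (v t th) i j = (\sum_a \sum_b th a 0 * th b 0 * F a b i j)%:E) ->
  TI_SMP_with P (@simplex R dth) v (M_poly F) (@phi_poly R dth).
Proof.
move=> F_sym smom_quad; split=> [k|th|t th th_simplex i j].
- exact: F_sym.
- exact: simplex_phi_poly.
- by rewrite sum_phi_poly_M_poly smom_quad.
Qed.

Lemma TI_SMP_with_iid S v (vt : nat -> Omega -> 'cV[R]_D) :
  (forall t i, (fun w => vt t w i 0) \in Lfun P 2%:E) ->
  ident_distr P (fun t i w => vt t w i 0) ->
  (forall t th w, S th -> v t th w = vt t w) ->
  TI_SMP_with P S v (fun _ : 'I_1 => \matrix_(i, j) fine (smom P (vt 0%N) i j))
    (fun _ => const_mx 1).
Proof.
move=> vt_L2 vt_law v_vt; split=> [k|th _|t th Sth i j].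
- apply/matrixP => i j; rewrite !mxE /smom.
  by congr (fine (expectation P _)); apply/funext => w; rewrite mulrC.
- by split=> [k|]; rewrite ?big_ord1 mxE.
- have mvt s k : measurable_fun setT (fun w => vt s w k 0).
    by move: (vt_L2 s k) => /sub_Lfun_mfun; rewrite inE.
  rewrite big_ord1 !mxE mul1r /smom.
  under eq_fun do rewrite v_vt //.
  rewrite (ident_distr_expectation_mul (X := fun t i w => vt t w i 0)) //.
  by rewrite fineK // expectation_fin_num // Lfun2_mul_Lfun1.
Qed.

Lemma TI_SMP_with_polytope v (vk : 'I_dth -> 'cV[R]_D) :
  (forall t th w, simplex th -> v t th w = \sum_k th k 0 *: vk k) ->
  TI_SMP_with P (@simplex R dth) v
    (M_poly (fun k k' => 2^-1 *: (vk k *m (vk k')^T + vk k' *m (vk k)^T)))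
    (@phi_poly R dth).
Proof.
move=> v_vk; apply: TI_SMP_with_phi_poly => [a b|t th th_simplex i j].
  exact: tr_symprod.
rewrite /smom; under eq_fun do rewrite v_vk // mul_sumZ_coord.
rewrite expectation_cst -sum_quad_symmetrize.
by congr EFin; apply: eq_bigr => a _; apply: eq_bigr => b _; rewrite symprodE.
Qed.

Lemma TI_SMP_with_random_polytope v (vk : nat -> 'I_dth -> Omega -> 'cV[R]_D) :
  (forall t k i, (fun w => vk t k w i 0) \in Lfun P 2%:E) ->
  ident_distr P (fun t (ki : 'I_dth * 'I_D) w => vk t ki.1 w ki.2 0) ->
  (forall t th w, simplex th -> v t th w = \sum_k th k 0 *: vk t k w) ->
  TI_SMP_with P (@simplex R dth) v
    (M_poly (fun k k' => \matrix_(i, j)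
       (2^-1 * fine ('E_P[(fun w => vk 0%N k w i 0 * vk 0%N k' w j 0
                                + vk 0%N k' w i 0 * vk 0%N k w j 0)%R])%E)))
    (@phi_poly R dth).
Proof.
move=> vk_L2 vk_law v_vk.
have vk_L1 t a b i j : (fun w => vk t a w i 0 * vk t b w j 0) \in Lfun P 1.
  exact: Lfun2_mul_Lfun1.
have vk_law_mul t a b i j : expectation P (fun w => vk t a w i 0 * vk t b w j 0) =
    expectation P (fun w => vk 0%N a w i 0 * vk 0%N b w j 0).
  apply: (ident_distr_expectation_mul (X := fun t ki w => vk t ki.1 w ki.2 0) (a, i) (b, j)) => //.
  by move=> s [k l]; move: (vk_L2 s k l) => /sub_Lfun_mfun; rewrite inE.
apply: TI_SMP_with_phi_poly => [a b|t th th_simplex i j].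
  apply/matrixP => i j; rewrite !mxE.
  by congr (_ * fine (expectation P _)); apply/funext => w; rewrite addrC mulrC [X in _ + X]mulrC.
rewrite /smom; under eq_fun do rewrite v_vk // mul_sumZ_coord pair_bigA.
rewrite expectation_sumZ; last by move=> [a b]; exact: vk_L1.
rewrite -(pair_bigA _ (fun a b => th a 0 * th b 0 *
  fine (expectation P (fun w => vk t a w i 0 * vk t b w j 0)))) /=.
under eq_bigr do under eq_bigr do rewrite vk_law_mul.
rewrite -sum_quad_symmetrize.
congr EFin; apply: eq_bigr => a _; apply: eq_bigr => b _.
by rewrite mxE expectationD ?fineD ?expectation_fin_num.
Qed.

Lemma TI_SMP_with_mean_cov v (mu : 'I_dth -> 'cV[R]_D) (Sigma : 'I_dth -> 'M[R]_D) :
  (forall k, (Sigma k)^T = Sigma k) ->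
  (forall t th i, simplex th -> (fun w => v t th w i 0) \in Lfun P 2%:E) ->
  (forall t th i, simplex th ->
     expectation P (fun w => v t th w i 0) = (\sum_k th k 0 * mu k i 0)%:E) ->
  (forall t th i j, simplex th ->
     covariance P (fun w => v t th w i 0) (fun w => v t th w j 0) =
     (\sum_k th k 0 * Sigma k i j)%:E) ->
  TI_SMP_with P (@simplex R dth) v
    (M_poly (fun k k' => 2^-1 *: (mu k *m (mu k')^T + mu k' *m (mu k)^T) + Sigma k))
    (@phi_poly R dth).
Proof.
move=> Sigma_sym v_L2 v_mean v_cov.
apply: TI_SMP_with_phi_poly => [a b|t th th_simplex i j].
  by rewrite linearD /= tr_symprod Sigma_sym.
have L2_L1 f : f \in Lfun P 2%:E -> f \in Lfun P 1.
  by apply: Lfun_subset12; exact: fin_num_measure.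
have [vi vj] := (v_L2 t th i th_simplex, v_L2 t th j th_simplex).
have := v_cov t th i j th_simplex.
rewrite covarianceE; [|exact: L2_L1 vi|exact: L2_L1 vj|exact: Lfun2_mul_Lfun1 vi vj].
move=> cov_eq; rewrite !v_mean // -EFinM in cov_eq.
have -> : smom P (v t th) i j = ((\sum_k th k 0 * Sigma k i j) +
    (\sum_k th k 0 * mu k i 0) * (\sum_k th k 0 * mu k j 0))%:E.
  by rewrite EFinD -cov_eq subeK.
congr EFin.
under [RHS]eq_bigr do under eq_bigr do rewrite mxE symprodE mulrDr.
under [RHS]eq_bigr do rewrite big_split.
rewrite big_split /= sum_quad_symmetrize addrC; congr (_ + _).
  case: th_simplex => _ th_sum1; apply: eq_bigr => a _.
  by rewrite -[LHS]mulr1 -th_sum1 mulr_sumr; apply: eq_bigr => b _; rewrite mulrAC.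
by rewrite big_distrlr; apply: eq_bigr => a _; apply: eq_bigr => b _; rewrite mulrACA.
Qed.

End TI_SMP_cases.

Theorem theorem10 (R : realType) (d : measure_display) (Omega : measurableType d)
  (P : probability Omega R) (n m dth : nat) (hdth : (0 < dth)%N) :
  (* (i) v_t(theta) = v_t i.i.d. in t, independent of theta *)
  (forall (A : nat -> 'cV[R]_dth -> Omega -> 'M[R]_n)
          (B : nat -> 'cV[R]_dth -> Omega -> 'M[R]_(n, m))
          (vt : nat -> Omega -> 'cV[R]_((n + m) * n)),
     (forall t i, (fun w => vt t w i 0) \in Lfun P 2%:E) ->
     iid P (fun t i w => vt t w i 0) ->
     (forall t theta w, simplex theta -> vAB A B t theta w = vt t w) ->
     TI_SMP_with P (@simplex R dth) (vAB A B)
       (fun _ : 'I_1 => \matrix_(i, j) fine (smom P (vt 0%N) i j))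
       (fun _ => const_mx 1)
     /\ TI_SMP P (@simplex R dth) (vAB A B)) /\
  (* (ii) deterministic polytope *)
  (forall (A : nat -> 'cV[R]_dth -> Omega -> 'M[R]_n)
          (B : nat -> 'cV[R]_dth -> Omega -> 'M[R]_(n, m))
          (vk : 'I_dth -> 'cV[R]_((n + m) * n)),
     (forall t theta w, simplex theta ->
        vAB A B t theta w = \sum_k theta k 0 *: vk k) ->
     TI_SMP_with P (@simplex R dth) (vAB A B)
       (M_poly (fun k k' => 2^-1 *: (vk k *m (vk k')^T + vk k' *m (vk k)^T)))
       (@phi_poly R dth)
     /\ TI_SMP P (@simplex R dth) (vAB A B)) /\
  (* (iii) random polytope with i.i.d. random vertices *)
  (forall (A : nat -> 'cV[R]_dth -> Omega -> 'M[R]_n)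
          (B : nat -> 'cV[R]_dth -> Omega -> 'M[R]_(n, m))
          (vk : nat -> 'I_dth -> Omega -> 'cV[R]_((n + m) * n)),
     (forall t k i, (fun w => vk t k w i 0) \in Lfun P 2%:E) ->
     iid P (fun t (ki : 'I_dth * 'I_((n + m) * n)) w => vk t ki.1 w ki.2 0) ->
     (forall t theta w, simplex theta ->
        vAB A B t theta w = \sum_k theta k 0 *: vk t k w) ->
     TI_SMP_with P (@simplex R dth) (vAB A B)
       (M_poly (fun k k' => \matrix_(i, j)
          (2^-1 * fine ('E_P[(fun w => vk 0%N k w i 0 * vk 0%N k' w j 0
                                   + vk 0%N k' w i 0 * vk 0%N k w j 0)%R])%E)))
       (@phi_poly R dth)
     /\ TI_SMP P (@simplex R dth) (vAB A B)) /\
  (* (iv) uncertain mean and covariance *)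
  (forall (A : nat -> 'cV[R]_dth -> Omega -> 'M[R]_n)
          (B : nat -> 'cV[R]_dth -> Omega -> 'M[R]_(n, m))
          (mu : 'I_dth -> 'cV[R]_((n + m) * n))
          (Sigma : 'I_dth -> 'M[R]_((n + m) * n)),
     (forall k, (Sigma k)^T = Sigma k) ->
     (forall theta, simplex theta ->
        indep_seq P (fun t i w => vAB A B t theta w i 0)) ->
     (forall t theta i, simplex theta ->
        (fun w => vAB A B t theta w i 0) \in Lfun P 2%:E) ->
     (forall t theta i, simplex theta ->
        ('E_P[(fun w => vAB A B t theta w i 0)%R] = (\sum_k theta k 0 * mu k i 0)%R%:E)%E) ->
     (forall t theta i j, simplex theta ->
        covariance P (fun w => vAB A B t theta w i 0) (fun w => vAB A B t theta w j 0)
        = (\sum_k theta k 0 * Sigma k i j)%:E) ->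
     TI_SMP_with P (@simplex R dth) (vAB A B)
       (M_poly (fun k k' => 2^-1 *: (mu k *m (mu k')^T + mu k' *m (mu k)^T) + Sigma k))
       (@phi_poly R dth)
     /\ TI_SMP P (@simplex R dth) (vAB A B)).
Proof.
have N_gt0 : (0 < dth * dth)%N by rewrite muln_gt0 hdth.
split; [|split; [|split]].
- move=> A B vt vt_L2 [_ vt_law] v_vt.
  have smp := TI_SMP_with_iid vt_L2 vt_law v_vt.
  by split; last exact: TI_SMP_withW smp.
- move=> A B vk v_vk.
  have smp := TI_SMP_with_polytope P v_vk.
  by split; last exact: TI_SMP_withW N_gt0 smp.
- move=> A B vk vk_L2 [_ vk_law] v_vk.
  have smp := TI_SMP_with_random_polytope vk_L2 vk_law v_vk.
  by split; last exact: TI_SMP_withW N_gt0 smp.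
- move=> A B mu Sigma Sigma_sym _ v_L2 v_mean v_cov.
  have smp := TI_SMP_with_mean_cov Sigma_sym v_L2 v_mean v_cov.
  by split; last exact: TI_SMP_withW N_gt0 smp.
Qed.
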